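(* Let $\lambda=0.098$, $f_1=5-\log5$, and define $V(f)=\frac{\pi}{2^{1/2}}+\lambda(f-1)^{3/2}$ and $W(f)=V(f)^2-\log(4V(f)^2)-f$ for $f\ge1$. Then $0<\lambda<\dfrac{2J(f_1)}{3(f_1-1)}$, $W(f_1)>0$, and $W'(f_1)<0$.
   Context: For $f>1$ let $h^*(f)>1$ and $h_*(f)\in(0,1)$ be the two solutions $h$ of $h-\log h=f$, and set $J(f)=\frac1{h^*(f)-1}+\frac1{1-h_*(f)}-\big(\frac2{f-1}\big)^{1/2}$. *)

From Stdlib Require Import Reals Lra ClassicalEpsilon.
From Coquelicot Require Import Coquelicot.
Open Scope R_scope.

(* h^*(f): the solution h > 1 of h - ln h = f (unique for f > 1). *)
Definition h_upper (f : R) : R :=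
  epsilon (inhabits 1) (fun h => 1 < h /\ h - ln h = f).

(* h_*(f): the solution h in (0,1) of h - ln h = f (unique for f > 1). *)
Definition h_lower (f : R) : R :=
  epsilon (inhabits 1) (fun h => 0 < h < 1 /\ h - ln h = f).

Definition J (f : R) : R :=
  / (h_upper f - 1) + / (1 - h_lower f) - sqrt (2 / (f - 1)).

Definition lam : R := 0.098.

Definition f1 : R := 5 - ln 5.

(* (f-1)^{3/2} written as (f-1) * sqrt (f-1), valid for f >= 1. *)
Definition V (f : R) : R := PI / sqrt 2 + lam * ((f - 1) * sqrt (f - 1)).

Definition W (f : R) : R := (V f) ^ 2 - ln (4 * (V f) ^ 2) - f.

From Stdlib Require Import Reals Lra ClassicalEpsilon.
From Coquelicot Require Import Coquelicot.
Open Scope R_scope.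

(* Since [f1 = 5 - ln 5], [h^*(f1) = 5] exactly, while [h_*(f1) > exp (- f1) = 5 / e^5];
   this bounds [J f1] from below.  The chain rule gives
   [W' = 2 (V - 1/V) V' - 1] with [V' = (3/2) lam sqrt (f - 1)].  What remains is
   interval arithmetic on [ln 5], [PI] and square roots, with [W f1 > 0] reduced to
   [4 V^2 < 5 exp (V^2 - 5)]. *)

Lemma exp_le_inv_one_minus z : z < 1 -> exp z <= / (1 - z).
Proof.
  intros Hz. rewrite <- (Rinv_inv (exp z)), <- exp_Ropp.
  apply Rinv_le_contravar; [lra | apply exp_ineq1_le].
Qed.

Lemma exp_double_le x a b : exp x <= a -> a * a <= b -> exp (2 * x) <= b.
Proof.
  intros Ha Hab. replace (2 * x) with (x + x) by ring. rewrite exp_plus.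
  pose proof (exp_pos x). nra.
Qed.

Lemma sqrt_between x a b : 0 <= a -> 0 <= b -> a * a < x -> x < b * b -> a < sqrt x < b.
Proof.
  intros Ha Hb Hax Hxb. pose proof (sqrt_sqrt x ltac:(nra)). pose proof (sqrt_pos x).
  split; nra.
Qed.

Lemma PI_between : 3.141592 < PI < 3.1416.
Proof.
  destruct (PI_2_3_7_ineq 6) as [Hlo Hhi].
  cbn [sum_f_R0] in Hlo, Hhi. unfold tg_alt, PI_2_3_7_tg, Ratan_seq in Hlo, Hhi.
  simpl in Hlo, Hhi. lra.
Qed.

(* [fact_simpl] and [mult_INR] keep Rocq from computing [fact 14] in unary. *)
Ltac eval_exp_taylor :=
  cbn [sum_f_R0]; repeat rewrite fact_simpl; rewrite !mult_INR; simpl INR; lra.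

Lemma ln5_lt : ln 5 < 1.60944.
Proof.
  rewrite <- (ln_exp 1.60944). apply ln_increasing; [lra|].
  eapply Rlt_le_trans; [| apply (exp_ge_taylor _ 14); lra]. eval_exp_taylor.
Qed.

(* [exp] is bounded above at [1.607 / 2^10] by [/ (1 - z)], then squared ten times. *)
Lemma ln5_gt : 1.607 < ln 5.
Proof.
  rewrite <- (ln_exp 1.607). apply ln_increasing; [apply exp_pos|].
  assert (H0 : exp (1.607 / 1024) <= 1.001571802624).
  { eapply Rle_trans; [apply exp_le_inv_one_minus; lra | lra]. }
  pose proof (exp_double_le _ _ 1.003146075812 H0 ltac:(lra)) as H1.
  pose proof (exp_double_le _ _ 1.006302049418 H1 ltac:(lra)) as H2.
  pose proof (exp_double_le _ _ 1.012643814663 H2 ltac:(lra)) as H3.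
  pose proof (exp_double_le _ _ 1.025447495376 H3 ltac:(lra)) as H4.
  pose proof (exp_double_le _ _ 1.051542565773 H4 ltac:(lra)) as H5.
  pose proof (exp_double_le _ _ 1.105741767633 H5 ltac:(lra)) as H6.
  pose proof (exp_double_le _ _ 1.222664856689 H6 ltac:(lra)) as H7.
  pose proof (exp_double_le _ _ 1.494909351783 H7 ltac:(lra)) as H8.
  pose proof (exp_double_le _ _ 2.234753970049 H8 ltac:(lra)) as H9.
  pose proof (exp_double_le _ _ 4.994125306650 H9 ltac:(lra)) as H10.
  replace 1.607
    with (2 * (2 * (2 * (2 * (2 * (2 * (2 * (2 * (2 * (2 * (1.607 / 1024))))))))))) by lra.
  lra.
Qed.

Lemma exp5_le : exp 5 <= 243.
Proof.
  replace 5 with (1 + 1 + 1 + 1 + 1) by ring. rewrite !exp_plus.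
  pose proof exp_le_3. pose proof (exp_pos 1). set (e := exp 1) in *.
  assert (e * e <= 9) by nra. assert (e * e * e <= 27) by nra.
  assert (e * e * e * e <= 81) by nra. nra.
Qed.

Lemma ln_lt_sub_one x : 1 < x -> ln x < x - 1.
Proof.
  intros Hx. assert (0 < ln x) by (rewrite <- ln_1; apply ln_increasing; lra).
  pose proof (exp_ineq1 (ln x) ltac:(lra)). rewrite exp_ln in * by lra. lra.
Qed.

Lemma sub_ln_increasing a b : 1 <= a -> a < b -> a - ln a < b - ln b.
Proof.
  intros Ha Hab.
  assert (Hq : ln (b / a) < b / a - 1).
  { apply ln_lt_sub_one, Rlt_gt, (Rmult_lt_reg_r a); field_simplify; lra. }
  rewrite ln_div in Hq by lra.
  assert (b / a - 1 <= b - a).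
  { apply (Rmult_le_reg_r a); [lra|]. field_simplify; nra. }
  lra.
Qed.

Lemma h_upper_eq f h : 1 < h -> h - ln h = f -> h_upper f = h.
Proof.
  intros Hh Hf. unfold h_upper.
  destruct (epsilon_spec (inhabits 1) (fun h => 1 < h /\ h - ln h = f)) as [H1 H2];
    [exists h; auto|].
  set (h' := epsilon _ _) in *.
  destruct (Rtotal_order h' h) as [Hlt | [Heq | Hgt]]; [| exact Heq |].
  - pose proof (sub_ln_increasing h' h ltac:(lra) Hlt). lra.
  - pose proof (sub_ln_increasing h h' ltac:(lra) Hgt). lra.
Qed.

(* The root is [exp (- z)] for a zero [z] of [t |-> exp (- t) + t - f] on [0, f]. *)
Lemma h_lower_spec f : 1 < f -> 0 < h_lower f < 1 /\ h_lower f - ln (h_lower f) = f.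
Proof.
  intros Hf. unfold h_lower. apply epsilon_spec.
  assert (Hc : continuity (fun t => exp (- t) + t - f)) by (intros x; reg).
  assert (H0 : exp (- 0) + 0 - f < 0) by (rewrite Ropp_0, exp_0; lra).
  assert (Hfz : 0 < exp (- f) + f - f) by (pose proof (exp_pos (- f)); lra).
  destruct (IVT _ 0 f Hc ltac:(lra) H0 Hfz) as [z [Hz Ez]].
  assert (z <> 0) by (intros ->; lra).
  exists (exp (- z)). repeat split.
  - apply exp_pos.
  - rewrite <- exp_0. apply exp_increasing. lra.
  - rewrite ln_exp. lra.
Qed.

(* [ln h = h - f] gives [h = exp (h - f)] with [h > 0]. *)
Lemma exp_opp_lt_h_lower f : 1 < f -> exp (- f) < h_lower f.
Proof.
  intros Hf. destruct (h_lower_spec f Hf) as [Hh Heq].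
  set (h := h_lower f) in *.
  assert (Eh : h = exp (h - f)) by (rewrite <- (exp_ln h) at 1 by lra; f_equal; lra).
  rewrite Eh. apply exp_increasing. lra.
Qed.

Lemma V_pos f : 1 <= f -> 0 < V f.
Proof.
  intros Hf. unfold V, lam.
  assert (0 < PI / sqrt 2) by (apply Rdiv_lt_0_compat; [exact PI_RGT_0 | apply sqrt_lt_R0; lra]).
  assert (0 <= (f - 1) * sqrt (f - 1)) by (apply Rmult_le_pos; [lra | apply sqrt_pos]).
  nra.
Qed.

Lemma is_derive_V f : 1 < f -> is_derive V f (lam * (3 / 2) * sqrt (f - 1)).
Proof.
  intros Hf. unfold V. auto_derive; [lra|].
  replace (f + - (1)) with (f - 1) by ring.
  assert (Hs : 0 < sqrt (f - 1)) by (apply sqrt_lt_R0; lra).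
  rewrite <- (sqrt_sqrt (f - 1)) at 2 by lra.
  field. lra.
Qed.

Lemma is_derive_sq_minus_ln v : 0 < v ->
  is_derive (fun v => v ^ 2 - ln (4 * v ^ 2)) v (2 * (v - / v)).
Proof. intros Hv. auto_derive; [nra|]. field. lra. Qed.

Lemma is_derive_W f : 1 < f ->
  is_derive W f (2 * (V f - / V f) * (lam * (3 / 2) * sqrt (f - 1)) - 1).
Proof.
  intros Hf.
  pose proof (is_derive_comp _ V f _ _
    (is_derive_sq_minus_ln _ (V_pos f ltac:(lra))) (is_derive_V f Hf)) as HG.
  pose proof (is_derive_minus _ _ f _ _ HG (is_derive_id f)) as HW.
  replace (2 * (V f - / V f) * (lam * (3 / 2) * sqrt (f - 1)) - 1)
    with (minus (scal (lam * (3 / 2) * sqrt (f - 1)) (2 * (V f - / V f))) one)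
    by (unfold minus, plus, opp, one, scal; simpl; unfold mult; simpl; ring).
  exact HW.
Qed.

Lemma f1_sub1_between : 2.39056 < f1 - 1 < 2.393.
Proof. pose proof ln5_lt; pose proof ln5_gt. unfold f1. lra. Qed.

Lemma h_lower_f1_gt : 5 / 243 < h_lower f1.
Proof.
  pose proof f1_sub1_between.
  eapply Rle_lt_trans; [| apply exp_opp_lt_h_lower; lra].
  replace (- f1) with (ln 5 + Ropp 5) by (unfold f1; ring).
  rewrite exp_plus, exp_ln, exp_Ropp by lra.
  pose proof exp5_le. pose proof (exp_pos 5).
  assert (/ 243 <= / exp 5) by (apply Rinv_le_contravar; lra).
  unfold Rdiv. lra.
Qed.

Lemma J_f1_gt : 0.3563 < J f1.
Proof.
  pose proof f1_sub1_between. pose proof h_lower_f1_gt.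
  destruct (h_lower_spec f1 ltac:(lra)) as [Hh _].
  unfold J. rewrite (h_upper_eq f1 5) by (unfold f1; lra).
  assert (/ (1 - 5 / 243) <= / (1 - h_lower f1)) by (apply Rinv_le_contravar; lra).
  assert (Hsq : sqrt (2 / (f1 - 1)) < 0.91468).
  { apply (sqrt_between _ 0); try lra.
    - rewrite Rmult_0_l. apply Rdiv_lt_0_compat; lra.
    - assert (/ (f1 - 1) < / 2.39056) by (apply Rinv_lt_contravar; nra).
      unfold Rdiv. lra. }
  lra.
Qed.

Lemma sqrt_f1_sub1_between : 1.546143 < sqrt (f1 - 1) < 1.547.
Proof. pose proof f1_sub1_between. apply sqrt_between; lra. Qed.

Lemma V_f1_between : 2.5836633 <= V f1 <= 2.58424.
Proof.
  pose proof PI_between. pose proof f1_sub1_between. pose proof sqrt_f1_sub1_between.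
  assert (Hs2 : 1.41421356 < sqrt 2 < 1.41421357) by (apply sqrt_between; lra).
  assert (Hq : PI / sqrt 2 * sqrt 2 = PI) by (field; lra).
  assert (0 < PI / sqrt 2) by (apply Rdiv_lt_0_compat; lra).
  assert (2.39056 * 1.546143 <= (f1 - 1) * sqrt (f1 - 1)) by (apply Rmult_le_compat; lra).
  assert ((f1 - 1) * sqrt (f1 - 1) <= 2.393 * 1.547) by (apply Rmult_le_compat; lra).
  unfold V, lam. split; nra.
Qed.

(* With [W f1 = V^2 - ln (4 V^2) - 5 + ln 5], positivity means [4 V^2 < 5 exp (V^2 - 5)];
   write [V^2 = 6.675316 + d] and use [exp d >= 1 + d]. *)
Lemma W_f1_pos : 0 < W f1.
Proof.
  pose proof V_f1_between. unfold W. set (v := V f1) in *.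
  set (d := v ^ 2 - 6.675316).
  assert (Hd : 0 <= d) by (unfold d; nra).
  assert (Hexp : 4 * v ^ 2 < 5 * exp (v ^ 2 - 5)).
  { replace (v ^ 2 - 5) with (1.675316 + d) by (unfold d; lra).
    rewrite exp_plus.
    assert (5.340482 <= exp 1.675316)
      by (eapply Rle_trans; [| apply (exp_ge_taylor _ 14); lra]; eval_exp_taylor).
    pose proof (exp_ineq1_le d).
    assert (5.340482 * (1 + d) <= exp 1.675316 * exp d) by (apply Rmult_le_compat; lra).
    replace (v ^ 2) with (6.675316 + d) by (unfold d; lra). lra. }
  apply ln_increasing in Hexp; [| nra].
  rewrite (ln_mult 5), ln_exp in Hexp by (try apply exp_pos; lra).
  unfold f1. lra.
Qed.

Lemma derive_W_f1_neg : 2 * (V f1 - / V f1) * (lam * (3 / 2) * sqrt (f1 - 1)) - 1 < 0.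
Proof.
  pose proof V_f1_between. pose proof sqrt_f1_sub1_between.
  assert (/ 2.58424 <= / V f1) by (apply Rinv_le_contravar; lra).
  assert (/ V f1 <= / 1) by (apply Rinv_le_contravar; lra).
  assert ((V f1 - / V f1) * sqrt (f1 - 1) <= (2.58424 - / 2.58424) * 1.547)
    by (apply Rmult_le_compat; lra).
  unfold lam. lra.
Qed.

Theorem lemma2p8 :
  (0 < lam /\ lam < 2 * J f1 / (3 * (f1 - 1))) /\
  0 < W f1 /\
  (exists l : R, is_derive W f1 l /\ l < 0).
Proof.
  pose proof f1_sub1_between. pose proof J_f1_gt.
  split; [split | split].
  - unfold lam. lra.
  - apply (Rmult_lt_reg_r (3 * (f1 - 1))); [lra|].
    replace (2 * J f1 / (3 * (f1 - 1)) * (3 * (f1 - 1))) with (2 * J f1) by (field; lra).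
    unfold lam. lra.
  - exact W_f1_pos.
  - eexists. split; [apply is_derive_W; lra | exact derive_W_f1_neg].
Qed.
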